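(* Let $a,b\ge2$ and let $\alpha,\beta$ be integers with $\alpha<-b+1$ and $\beta>a-1$. Let $M_\sigma$ be the Poisson module over $\Lambda(a,b)$ with parameters $(\alpha,\beta)$ described in the context. Then $HP_0(\Lambda(a,b),M_\sigma)\cong\mathbb C$ and $HP_2(\Lambda(a,b),M_\sigma)=0$.
   Context: For integers $a,b\geq 2$, $\Lambda(a,b):=\mathbb C[X,Y]/(X^a,Y^b)$ with basis $X^iY^j$ ($0\le i\le a-1$, $0\le j\le b-1$) and Poisson bracket determined by $\{X,Y\}=XY$. For parameters $\alpha,\beta$, $M_\sigma$ is $\Lambda(a,b)$ as a $\Lambda(a,b)$-module, with external bracket $\{-,-\}_{M_\sigma}:M_\sigma\times\Lambda(a,b)\to M_\sigma$ given by $\{X^iY^j,X\}_{M_\sigma}=-(j+\alpha)X^{i+1}Y^j$, $\{X^iY^j,Y\}_{M_\sigma}=(i-\beta)X^iY^{j+1}$ (extended linearly in the first argument and by $\{m,fg\}_{M_\sigma}=\{m,f\}_{M_\sigma}g+\{m,g\}_{M_\sigma}f$ in the second). Kähler forms: $\Omega^0=\Lambda(a,b)$; $\Omega^1=(\Lambda(a,b)dX\oplus\Lambda(a,b)dY)/(X^{a-1}dX,\ Y^{b-1}dY)$, with basis $X^iY^jdX$ ($0\le i\le a-2$, $0\le j\le b-1$) and $X^iY^jdY$ ($0\le i\le a-1$, $0\le j\le b-2$); $\Omega^2$ has basis $X^iY^j\,dX\wedge dY$ ($0\le i\le a-2$, $0\le j\le b-2$); $\Omega^k=0$ for $k\ge3$.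 The Poisson homology $HP_*(\Lambda(a,b),M)$ with coefficients in a right Poisson module $M$ is the homology of the complex $M\otimes_{\Lambda(a,b)}\Omega^k$ with boundary $$\partial_k(m\otimes da_1\wedge\dots\wedge da_k)=\sum_{i}(-1)^{i+1}\{m,a_i\}_M\otimes da_1\wedge\cdots\widehat{da_i}\cdots\wedge da_k+\sum_{i<j}(-1)^{i+j}m\otimes d\{a_i,a_j\}\wedge da_1\wedge\cdots\widehat{da_i}\cdots\widehat{da_j}\cdots\wedge da_k;$$ concretely $\partial_1(m\otimes dX)=\{m,X\}_M$, $\partial_1(m\otimes dY)=\{m,Y\}_M$, $\partial_2(m\otimes dX\wedge dY)=\{m,X\}_M\otimes dY-\{m,Y\}_M\otimes dX-(mX\otimes dY+mY\otimes dX)$. *)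

From HB Require Import structures.
From mathcomp Require Import all_boot all_order all_algebra.
Set Implicit Arguments. Unset Strict Implicit. Unset Printing Implicit Defensive.
Import Order.TTheory GRing.Theory Num.Theory.
Local Open Scope ring_scope.

Section PoissonHomology.
Variables (F : fieldType) (a b : nat) (alpha beta : int).

(* Elements of Lambda(a,b) = F[X,Y]/(X^a,Y^b) are represented by their
   coefficient functions  c : nat -> nat -> F,  c i j = coefficient of X^i Y^j.
   Only the coefficients with i < a, j < b are ever read (see below),
   which realises the relations X^a = 0, Y^b = 0. *)
Definition lam := nat -> nat -> F.

Definition lam_add (m n : lam) : lam := fun i j => m i j + n i j.
Definition lam_opp (m : lam) : lam := fun i j => - m i j.
Definition lam_scale (c : F) (m : lam) : lam := fun i j => c * m i j.

Definition mono (i j : nat) : lam := fun p q => ((p == i) && (q == j))%:R.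

(* module multiplications  X^iY^j * X  and  X^iY^j * Y  in M_sigma = Lambda *)
Definition mulX_mono (i j : nat) : lam := mono i.+1 j.
Definition mulY_mono (i j : nat) : lam := mono i j.+1.

(* external bracket of M_sigma on monomials:
   {X^iY^j, X} = -(j+alpha) X^{i+1}Y^j,  {X^iY^j, Y} = (i-beta) X^iY^{j+1} *)
Definition brX_mono (i j : nat) : lam :=
  lam_scale (- ((j%:Z + alpha)%:~R)) (mono i.+1 j).
Definition brY_mono (i j : nat) : lam :=
  lam_scale ((i%:Z - beta)%:~R) (mono i j.+1).

(* bases of the chain spaces  M (x)_Lambda Omega^k  (M = Lambda) *)
Definition T0 := ('I_a * 'I_b)%type.
(* k = 1 : inl (i,j) = X^iY^j (x) dX  (i < a-1, j < b),
           inr (i,j) = X^iY^j (x) dY  (i < a, j < b-1) *)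
Definition T1 := (('I_a.-1 * 'I_b) + ('I_a * 'I_b.-1))%type.
(* k = 2 : X^iY^j (x) dX/\dY, i < a-1, j < b-1 *)
Definition T2 := ('I_a.-1 * 'I_b.-1)%type.

Definition coord0 (m : lam) (t : T0) : F := m t.1 t.2.
(* m (x) dX and m (x) dY in M (x) Omega^1 (the relations X^{a-1}dX = 0,
   Y^{b-1}dY = 0 are realised by not reading those coefficients) *)
Definition tdX (m : lam) (t : T1) : F :=
  match t with inl p => m p.1 p.2 | inr _ => 0 end.
Definition tdY (m : lam) (t : T1) : F :=
  match t with inl _ => 0 | inr p => m p.1 p.2 end.

(* boundary d_1 on basis elements:
   d_1(m (x) dX) = {m,X}_M,  d_1(m (x) dY) = {m,Y}_M *)
Definition d1 (s : T1) : T0 -> F :=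
  match s with
  | inl p => coord0 (brX_mono p.1 p.2)
  | inr p => coord0 (brY_mono p.1 p.2)
  end.

(* boundary d_2 on basis elements:
   d_2(m (x) dX/\dY) = {m,X}_M (x) dY - {m,Y}_M (x) dX - (mX (x) dY + mY (x) dX) *)
Definition d2 (s : T2) : T1 -> F :=
  fun t =>
    tdY (brX_mono s.1 s.2) t - tdX (brY_mono s.1 s.2) t
    - (tdY (mulX_mono s.1 s.2) t + tdX (mulY_mono s.1 s.2) t).

(* matrices of the boundaries, acting on row vectors of coordinates *)
Definition D1 : 'M[F]_(#|{: T1}|, #|{: T0}|) :=
  \matrix_(k, l) d1 (enum_val k) (enum_val l).
Definition D2 : 'M[F]_(#|{: T2}|, #|{: T1}|) :=
  \matrix_(k, l) d2 (enum_val k) (enum_val l).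

(* HP_0 = C_0 / im d_1 ; its dimension over F *)
Definition HP0_dim : nat := (#|{: T0}| - \rank D1)%N.
(* HP_2 = ker d_2 (there is no C_3) ; its dimension over F *)
Definition HP2_dim : nat := \rank (kermx D2).

End PoissonHomology.

From HB Require Import structures.
From mathcomp Require Import all_boot all_order all_algebra.
From mathcomp Require Import zify ring.
Set Implicit Arguments.
Unset Strict Implicit.
Unset Printing Implicit Defensive.
Import Order.TTheory GRing.Theory Num.Theory.
Local Open Scope ring_scope.

(* Both homology groups are read off from the boundary matrices by a
   "pivot" argument.  Say that column j of a matrix f is a pivot for row i
   when f i j is the only nonzero entry of that column: then every row
   vector u with u f = 0 has u_i = 0.  Hence a matrix all of whose rows
   have a pivot has trivial left kernel, and a matrix with one zero row i0
   and pivots for all other rows has a one-dimensional left kernel.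
   - HP_2 = ker d_2: the dY-component of d_2(X^iY^j dX/\dY) at X^{i+1}Y^j
     is -(j+1+alpha), nonzero since j+1 < b and alpha < 1-b, and no other
     basis element of C_2 reaches this coordinate; so ker d_2 = 0.
   - HP_0 = C_0 / im d_1 has dimension dim ker d_1^T.  Every basis element
     of C_1 is sent by d_1 to a multiple of a single monomial of positive
     degree; the coefficient is -(j+alpha) or (i-beta), nonzero by the
     hypotheses on alpha and beta, and every monomial other than 1 is
     reached.  So d_1^T has a zero row at 1 and pivots elsewhere. *)

Section PivotKernels.
Variables (F : fieldType).
Implicit Types (I J : finType).

Definition fmatrix I J (f : I -> J -> F) : 'M[F]_(#|{: I}|, #|{: J}|) :=
  \matrix_(k, l) f (enum_val k) (enum_val l).

Lemma fmatrix_tr I J (f : I -> J -> F) :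
  (fmatrix f)^T = fmatrix (fun j i => f i j).
Proof. by apply/matrixP => k l; rewrite !mxE. Qed.

Definition pivot I J (f : I -> J -> F) (i : I) (j : J) : Prop :=
  f i j != 0 /\ forall i', i' != i -> f i' j = 0.

Lemma pivot_coord I J (f : I -> J -> F) (u : 'rV_#|{: I}|) i j :
  u *m fmatrix f = 0 -> pivot f i j -> u 0 (enum_rank i) = 0.
Proof.
move=> /matrixP /(_ 0 (enum_rank j)) uf0 [fij_neq0 col_j].
move: uf0; rewrite !mxE (bigD1 (enum_rank i)) //= big1 => [|k ki].
  rewrite addr0 mxE !enum_rankK => /eqP.
  by rewrite mulf_eq0 (negPf fij_neq0) orbF => /eqP.
rewrite mxE enum_rankK col_j ?mulr0 //.
by apply: contra ki => /eqP <-; rewrite enum_valK.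
Qed.

Lemma kermx_sub m n p (A : 'M[F]_(m, n)) (B : 'M[F]_(p, m)) :
  (forall u : 'rV_m, u *m A = 0 -> (u <= B)%MS) -> (kermx A <= B)%MS.
Proof.
by move=> kerB; apply/row_subP => k; apply: kerB; rewrite -row_mul mulmx_ker row0.
Qed.

Lemma rank_kermx_pivots0 I J (f : I -> J -> F) :
  (forall i, exists j, pivot f i j) -> \rank (kermx (fmatrix f)) = 0%N.
Proof.
move=> pivots; apply/eqP; rewrite mxrank_eq0 -submx0.
apply: kermx_sub => u uf0; rewrite submx0; apply/eqP/rowP => k.
have [j piv] := pivots (enum_val k).
by rewrite mxE -(enum_valK k) (pivot_coord uf0 piv).
Qed.

Lemma rank_kermx_pivots1 I J (f : I -> J -> F) (i0 : I) :
  (forall j, f i0 j = 0) -> (forall i, i != i0 -> exists j, pivot f i j) ->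
  \rank (kermx (fmatrix f)) = 1%N.
Proof.
move=> row_i0 pivots; set e : 'rV[F]_#|{: I}| := delta_mx 0 (enum_rank i0).
have e_ker : (e <= kermx (fmatrix f))%MS.
  rewrite sub_kermx -rowE; apply/eqP/rowP => l.
  by rewrite !mxE enum_rankK row_i0.
have ker_e : (kermx (fmatrix f) <= e)%MS.
  apply: kermx_sub => u uf0; set e0 := enum_rank i0.
  suff -> : u = u 0 e0 *: e by apply/scalemx_sub/submx_refl.
  apply/rowP => k; rewrite !mxE eqxx /=.
  case: (k =P e0) => [-> | ke0]; first by rewrite mulr1.
  rewrite mulr0.
  have /pivots [j piv] : enum_val k != i0.
    by apply/eqP => ki0; apply: ke0; rewrite /e0 -ki0 enum_valK.
  by rewrite -(enum_valK k) (pivot_coord uf0 piv).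
move: (mxrankS e_ker) (mxrankS ker_e); rewrite mxrank_delta => ge1 le1.
by apply/eqP; rewrite eqn_leq ge1 le1.
Qed.

End PivotKernels.

Lemma intr_neq0_pchar0 (F : fieldType) (z : int) :
  [pchar F] =i pred0 -> z != 0 -> z%:~R != 0 :> F.
Proof.
move=> /pcharf0P natr_eq0; case: z => n /=; first by rewrite -pmulrn natr_eq0.
by rewrite NegzE intrN oppr_eq0 -pmulrn natr_eq0.
Qed.

Lemma ord_succ_subproof n (i : 'I_n.-1) : (i.+1 < n)%N.
Proof. by case: n i => [|n] []. Qed.

Definition ord_succ n (i : 'I_n.-1) : 'I_n := Ordinal (ord_succ_subproof i).

Lemma ord_succ_onto n (i : 'I_n) : (0 < i)%N -> exists i', ord_succ i' = i.
Proof.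
move=> i_gt0; have lt_i : (i.-1 < n.-1)%N.
  by rewrite -ltnS prednK // (ltn_predK (ltn_ord i)).
by exists (Ordinal lt_i); apply: val_inj; rewrite /= prednK.
Qed.

Section Boundaries.
Variables (F : fieldType) (a b : nat) (alpha beta : int).

Definition d1_target (s : T1 a b) : T0 a b :=
  match s with
  | inl (i, j) => (ord_succ i, j)
  | inr (i, j) => (i, ord_succ j)
  end.

Definition d1_coef (s : T1 a b) : F :=
  match s with
  | inl (i, j) => - (j%:Z + alpha)%:~R
  | inr (i, j) => (i%:Z - beta)%:~R
  end.

Lemma d1E (s : T1 a b) (t : T0 a b) :
  d1 F alpha beta s t = d1_coef s * (t == d1_target s)%:R.
Proof. by case: s => [[i j]|[i j]]; case: t => p q. Qed.

(* The coefficient of X^{i+1}Y^j dY in d_2(X^iY^j dX/\dY):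
   -(j+alpha) from {m,X}_M (x) dY, and -1 from mX (x) dY. *)
Definition d2_coef (s : T2 a b) : F := - (s.2.+1%:Z + alpha)%:~R.

Lemma d2_dYE (s : T2 a b) (t : 'I_a * 'I_b.-1) :
  d2 F alpha beta s (inr t) = d2_coef s * (t == (ord_succ s.1, s.2))%:R.
Proof.
case: s t => [i j] [p q].
rewrite /d2 /d2_coef /brX_mono /mulX_mono /lam_scale /mono xpair_eqE /=.
have -> : (p == ord_succ i) = (p == i.+1 :> nat) by [].
by rewrite -(addn1 j) PoszD !intrD; ring.
Qed.

Hypotheses (hF : [pchar F] =i pred0) (ha : (2 <= a)%N) (hb : (2 <= b)%N).
Hypotheses (halpha : alpha < - (b%:Z) + 1) (hbeta : beta > a%:Z - 1).

(* The coefficients of d_1 never vanish: j + alpha < 0 for j < b and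
   i - beta < 0 for i < a. *)
Lemma d1_coef_neq0 (s : T1 a b) : d1_coef s != 0.
Proof.
case: s => [[i j]|[i j]] /=; rewrite ?oppr_eq0; apply: intr_neq0_pchar0 => //.
  by have := ltn_ord j; lia.
by have := ltn_ord i; lia.
Qed.

(* The coefficient of d_2 never vanishes: j + 1 + alpha < 0 for j + 1 < b. *)
Lemma d2_coef_neq0 (s : T2 a b) : d2_coef s != 0.
Proof.
rewrite oppr_eq0; apply: intr_neq0_pchar0 => //.
by case: s => i j /=; have := ltn_ord j; lia.
Qed.

Definition origin : T0 a b := (Ordinal (ltnW ha), Ordinal (ltnW hb)).

Lemma d1_target_onto (t : T0 a b) : t != origin -> exists s, d1_target s = t.
Proof.
case: t => p q t_neq0; case: (posnP p) => [p0 | p_gt0]; last first.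
  by have [i <-] := ord_succ_onto p_gt0; exists (inl (i, q)).
have q_gt0 : (0 < q)%N.
  rewrite lt0n; apply: contra t_neq0 => /eqP q0.
  by rewrite xpair_eqE; apply/andP; split; apply/eqP/val_inj.
by have [j <-] := ord_succ_onto q_gt0; exists (inr (p, j)).
Qed.

Lemma d1_origin (s : T1 a b) : d1 F alpha beta s origin = 0.
Proof.
rewrite d1E; case: s => [[i j]|[i j]];
  by rewrite xpair_eqE -!val_eqE /= ?andbF mulr0.
Qed.

Lemma d1T_pivot (s : T1 a b) :
  pivot (fun t s => d1 F alpha beta s t) (d1_target s) s.
Proof.
split=> [|t t_neq]; first by rewrite d1E eqxx mulr1 d1_coef_neq0.
by rewrite d1E (negPf t_neq) mulr0.
Qed.

Lemma d2_pivot (s : T2 a b) :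
  pivot (d2 F alpha beta) s (inr (ord_succ s.1, s.2)).
Proof.
split=> [|s' s'_neq]; first by rewrite d2_dYE eqxx mulr1 d2_coef_neq0.
rewrite d2_dYE; case: (_ =P _) => [[eq1 eq2] | _]; last by rewrite mulr0.
case/eqP: s'_neq.
by case: s s' eq1 eq2 => [i j] [i' j'] /= /val_inj -> ->.
Qed.

End Boundaries.

Theorem mainTheorem6 (F : fieldType) (hF : [pchar F] =i pred0)
  (a b : nat) (ha : (2 <= a)%N) (hb : (2 <= b)%N) (alpha beta : int)
  (halpha : alpha < - (b%:Z) + 1) (hbeta : beta > a%:Z - 1) :
  HP0_dim F a b alpha beta = 1%N /\ HP2_dim F a b alpha beta = 0%N.
Proof.
split.
- (* dim HP_0 = #|C_0| - rank d_1 = dim of the left kernel of d_1^T *)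
  rewrite /HP0_dim -mxrank_tr -mxrank_ker.
  change (D1 F a b alpha beta) with (fmatrix (@d1 F a b alpha beta)).
  rewrite fmatrix_tr.
  apply: (rank_kermx_pivots1 (i0 := origin ha hb)) => [s | t /d1_target_onto [s <-]].
    exact: d1_origin.
  by exists s; apply: d1T_pivot.
-
  apply: rank_kermx_pivots0 => s.
  by exists (inr (ord_succ s.1, s.2)); apply: d2_pivot.
Qed.
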